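(* Let $G$ be a $4$-graph. Then $G$ is $\mathscr C_2^{(4)}$-hom-free if and only if there is a function $c$ assigning to every $3$-element subset $T$ of $V(G)$ either the label ''blue'' or one of the three vertices of $T$, such that for every edge $e\in E(G)$ there is a vertex $v\in e$ for which $c(T)=v$ for each of the three $3$-subsets $T\subset e$ containing $v$, and $c(e\setminus\{v\})=$ ''blue''.
   Context: A $4$-graph is a $4$-uniform hypergraph. For $\ell>4$, the tight cycle $C_\ell^{(4)}$ has vertices $v_1,\dots,v_\ell$ and edges $\{v_i,v_{i+1},v_{i+2},v_{i+3}\}$ for $1\le i\le\ell$ (indices modulo $\ell$). A homomorphism $F\to G$ of $r$-graphs is a map $\phi:V(F)\to V(G)$ such that for every edge $\{x_1,\dots,x_r\}$ of $F$, the image $\{\phi(x_1),\dots,\phi(x_r)\}$ is an edge of $G$ (in particular these $r$ images are distinct). $G$ is $F$-hom-free if there is no homomorphism $F\to G$, and it is hom-free with respect to a family if it is $F$-hom-free for every member $F$. $\mathscr C_k^{(r)}$ denotes the family of all tight cycles $C_\ell^{(r)}$ with $\ell>r$ and $\ell\equiv k\pmod r$. *)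

From mathcomp Require Import all_boot.
Set Implicit Arguments. Unset Strict Implicit. Unset Printing Implicit Defensive.

Definition uniform4 (V : finType) (E : {set {set V}}) : Prop :=
  forall e, e \in E -> #|e| = 4.

(* Tight cycle C_l^(4): vertices 0..l-1, edges {i,i+1,i+2,i+3} (mod l).
   A map phi from its vertex set is given as phi : nat -> V, of which only
   the values on 0..l-1 matter. *)
Definition tc_vtx (l i k : nat) : nat := (i + k) %% l.

Definition tight_cycle_hom (V : finType) (E : {set {set V}}) (l : nat)
    (phi : nat -> V) : Prop :=
  forall i, i < l ->
    uniq [:: phi (tc_vtx l i 0); phi (tc_vtx l i 1);
             phi (tc_vtx l i 2); phi (tc_vtx l i 3)] /\
    [set phi (tc_vtx l i 0); phi (tc_vtx l i 1);
         phi (tc_vtx l i 2); phi (tc_vtx l i 3)] \in E.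

Definition tc_family_hom_free (V : finType) (E : {set {set V}}) (k : nat) : Prop :=
  forall l, 4 < l -> l = k %[mod 4] -> ~ exists phi : nat -> V, tight_cycle_hom E l phi.

(* A labelling c of the 3-subsets of V: None = "blue", Some v = vertex v,
   required to satisfy v \in T. *)
Definition valid_labelling (V : finType) (c : {set V} -> option V) : Prop :=
  forall T : {set V}, #|T| = 3 -> forall v, c T = Some v -> v \in T.

Definition good_labelling (V : finType) (E : {set {set V}})
    (c : {set V} -> option V) : Prop :=
  valid_labelling c /\
  forall e, e \in E ->
    exists2 v, v \in e &
      (forall T : {set V}, T \subset e -> #|T| = 3 -> v \in T -> c T = Some v) /\
      c (e :\ v) = None.

From mathcomp Require Import all_boot fingroup perm zify.
Set Implicit Arguments. Unset Strict Implicit. Unset Printing Implicit Defensive.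

(* A good labelling marks one vertex of each edge, and along a tight walk the
   position of the mark inside the current window of four vertices drops by one
   modulo 4 at each step, so a closed tight walk has length divisible by 4.

   Conversely, call an injective ordering t : 'I_4 -> V of an edge a frame, and
   call two frames adjacent when they differ in at most one coordinate.  Read
   cyclically, a frame is a tight walk, and a path of adjacent frames lifts to a
   tight walk.  The monodromy of a frame t, i.e. the permutations p with t o p
   connected to t, is closed under products.  It contains no derangement: a
   derangement of 'I_4 is conjugate to a rotation by r <> 0 (mod 4), and a path
   from a frame to its rotation closes up to a tight walk of length -r (mod 4),
   which wound up 3 or 6 times becomes a homomorphic image of a tight cycle of
   length 2 (mod 4).  A set of permutations of 'I_4 closed under products and
   without derangements has a common fixed point (checked by computation); the
   vertex of a frame in that coordinate marks the edge, consistently along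
   adjacent frames. *)

(** * Permutations of 'I_4 *)

Definition ord4 (n : nat) : 'I_4 := Ordinal (ltn_pmod n (isT : 0 < 4)).

Lemma ord4_val (k : 'I_4) : ord4 k = k.
Proof. by apply: val_inj; rewrite /= modn_small. Qed.

Lemma ord4_mod m n : m = n %[mod 4] -> ord4 m = ord4 n.
Proof. by move=> eq_mn; apply: val_inj. Qed.

Lemma rot4_inj r : injective (fun k : 'I_4 => ord4 (k + r)).
Proof.
move=> a b /(congr1 val) /= /eqP; rewrite eqn_modDr !modn_small // => /eqP.
exact: val_inj.
Qed.

Definition rot4 r : {perm 'I_4} := perm (@rot4_inj r).

(* A permutation of 'I_4 is encoded by its list of values, so that the finitely
   many cases below can be checked by computation. *)
Definition perm4_codes : seq (seq nat) := permutations (iota 0 4).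
Definition perm_code (g : {perm 'I_4}) : seq nat := [seq val (g (ord4 k)) | k <- iota 0 4].
Definition code_mul (c d : seq nat) : seq nat := [seq nth 0 d (nth 0 c k) | k <- iota 0 4].
Definition code_derangement (c : seq nat) : bool := all (fun k => nth 0 c k != k) (iota 0 4).

Lemma nth_perm_code g n : n < 4 -> nth 0 (perm_code g) n = g (ord4 n).
Proof. by move=> lt_n4; rewrite (nth_map 0) ?size_iota // nth_iota. Qed.

Lemma perm_code_mem g : perm_code g \in perm4_codes.
Proof.
have code_uniq : uniq (perm_code g).
  rewrite map_inj_in_uniq ?iota_uniq // => a b.
  rewrite !mem_iota /= => lt_a4 lt_b4 /val_inj /perm_inj /(congr1 (@nat_of_ord 4)).
  by rewrite /= !modn_small.
have code_sub : {subset perm_code g <= iota 0 4}.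
  by move=> _ /mapP [k _ ->]; rewrite mem_iota /=.
have [_ code_perm] := uniq_min_size code_uniq code_sub (eq_leq (esym (size_map _ _))).
by rewrite mem_permutations uniq_perm ?iota_uniq.
Qed.

Lemma perm_code_surj c : c \in perm4_codes -> exists s, perm_code s = c.
Proof.
rewrite mem_permutations => c_perm.
have size_c : size c = 4 by rewrite (perm_size c_perm) size_iota.
have lt_c4 k : k < 4 -> nth 0 c k < 4.
  move=> lt_k4; have : nth 0 c k \in iota 0 4 by rewrite -(perm_mem c_perm) mem_nth ?size_c.
  by rewrite mem_iota.
have c_inj : injective (fun k : 'I_4 => ord4 (nth 0 c k)).
  move=> a b /(congr1 val); rewrite /= !modn_small ?lt_c4 // => /eqP.
  by rewrite nth_uniq ?size_c ?(perm_uniq c_perm) ?iota_uniq // => /eqP /val_inj.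
exists (perm c_inj); apply: (@eq_from_nth _ 0); rewrite size_map size_iota ?size_c //.
by move=> k lt_k4; rewrite nth_perm_code // permE /= !modn_small ?lt_c4.
Qed.

Lemma perm_code_mul g h : perm_code (g * h)%g = code_mul (perm_code g) (perm_code h).
Proof.
apply/eq_in_map => k; rewrite mem_iota /= => lt_k4.
by rewrite nth_perm_code // nth_perm_code ?ltn_ord // permM ord4_val.
Qed.

Lemma perm_code_derangement g : code_derangement (perm_code g) = [forall k, g k != k].
Proof.
apply/allP/forallP => [fpf k | fpf k]; last first.
  rewrite mem_iota /= => lt_k4; rewrite nth_perm_code //.
  by apply: contra (fpf (ord4 k)) => /eqP gk; apply/eqP/val_inj; rewrite /= gk modn_small.
by move: (fpf k); rewrite mem_iota ltn_ord nth_perm_code // ord4_val (inj_eq val_inj) => ->.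
Qed.

Definition rotation_conjugacy_check : bool :=
  all (fun c => code_derangement c ==>
    has (fun s => has (fun r =>
      all (fun k => nth 0 c (nth 0 s k) == nth 0 s ((k + r) %% 4)) (iota 0 4))
      [:: 1; 2; 3]) perm4_codes) perm4_codes.

Lemma rotation_conjugacy_check_ok : rotation_conjugacy_check.
Proof. by vm_compute. Qed.

Lemma derangement_conj_rot4 (p : {perm 'I_4}) : [forall k, p k != k] ->
  exists s : {perm 'I_4}, exists2 r, r %% 4 != 0 & forall k, p (s k) = s (rot4 r k).
Proof.
rewrite -perm_code_derangement => fpf_p.
have /allP /(_ _ (perm_code_mem p)) := rotation_conjugacy_check_ok.
rewrite fpf_p => /hasP [_ /perm_code_surj [s <-] /hasP [r r_in /allP conj_ps]].
exists s, r; first by move: r_in; rewrite !inE => /or3P [] /eqP ->.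
move=> k; rewrite permE; move: (conj_ps k); rewrite mem_iota ltn_ord => /(_ isT) /eqP.
rewrite (nth_perm_code s) // (nth_perm_code p) // (nth_perm_code s) ?ltn_mod // !ord4_val.
by rewrite (@ord4_mod _ (k + r)) ?modn_mod // => /val_inj.
Qed.

Definition sub_products T (mul : T -> T -> T) (g0 g1 g2 g3 : T) : seq T :=
  [:: g0; g1; g2; g3; mul g0 g1; mul g0 g2; mul g0 g3; mul g1 g2; mul g1 g3; mul g2 g3;
      mul (mul g0 g1) g2; mul (mul g0 g1) g3; mul (mul g0 g2) g3].

Definition codes_moving (i : nat) : seq (seq nat) := [seq c <- perm4_codes | nth 0 c i != i].

Definition common_fixpoint_check : bool :=
  all (fun c0 => all (fun c1 => all (fun c2 => all (fun c3 =>
    has code_derangement (sub_products code_mul c0 c1 c2 c3))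
  (codes_moving 3)) (codes_moving 2)) (codes_moving 1)) (codes_moving 0).

Lemma common_fixpoint_check_ok : common_fixpoint_check.
Proof. by vm_compute. Qed.

(* Without a common fixed point, G contains for each i some g_i moving i, and by
   computation one of the [sub_products] of the g_i is a derangement. *)
Lemma perm4_common_fixpoint (G : pred {perm 'I_4}) :
  (forall g h, G g -> G h -> G (g * h)%g) -> (forall g, G g -> [exists k, g k == k]) ->
  exists k, forall g, G g -> g k = k.
Proof.
move=> G_mul G_fix.
have [/existsP [k fix_k] | no_common] := boolP [exists k, [forall g, G g ==> (g k == k)]].
  by exists k => g Gg; apply/eqP; move/forallP/(_ g)/implyP: fix_k; apply.
have moving i : i < 4 -> exists2 g, G g & nth 0 (perm_code g) i != i.
  move=> lt_i4; move/existsPn/(_ (ord4 i)): no_common => /forallPn [g].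
  rewrite negb_imply => /andP [Gg g_moves]; exists g; rewrite // nth_perm_code //.
  by apply: contra g_moves => /eqP gi; apply/eqP/val_inj => /=; rewrite gi modn_small.
have [g0 G0 m0] := moving 0 isT; have [g1 G1 m1] := moving 1 isT.
have [g2 G2 m2] := moving 2 isT; have [g3 G3 m3] := moving 3 isT.
have := common_fixpoint_check_ok.
move/allP/(_ (perm_code g0)); rewrite mem_filter m0 perm_code_mem => /(_ isT).
move/allP/(_ (perm_code g1)); rewrite mem_filter m1 perm_code_mem => /(_ isT).
move/allP/(_ (perm_code g2)); rewrite mem_filter m2 perm_code_mem => /(_ isT).
move/allP/(_ (perm_code g3)); rewrite mem_filter m3 perm_code_mem => /(_ isT).
have -> : sub_products code_mul (perm_code g0) (perm_code g1) (perm_code g2) (perm_code g3) =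
          map perm_code (sub_products (fun g h => g * h)%g g0 g1 g2 g3).
  by rewrite /= !perm_code_mul.
have G_words : all G (sub_products (fun g h => g * h)%g g0 g1 g2 g3).
  by rewrite /= !G_mul // G0 G1 G2 G3.
case/hasP => _ /mapP [w /(allP G_words) Gw ->] /[!perm_code_derangement] /forallP fpf_w.
by case/existsP: (G_fix w Gw) => k; rewrite (negbTE (fpf_w k)).
Qed.

(** * Good labellings exclude tight cycles of length 2 mod 4 *)

Section TightCycles.
Variables (V : finType) (E : {set {set V}}).
Hypothesis E_uniform : uniform4 E.
Implicit Types (c : {set V} -> option V) (e T : {set V}).

Definition ordered_edge (a b c d : V) : Prop := uniq [:: a; b; c; d] /\ [set a; b; c; d] \in E.

Lemma card_set3 (a b d : V) : uniq [:: a; b; d] -> #|[set a; b; d]| = 3.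
Proof. by move=> /card_uniqP /= <-; apply: eq_card => x; rewrite !inE -!orbA. Qed.

Lemma card_set4 (a b d f : V) : uniq [:: a; b; d; f] -> #|[set a; b; d; f]| = 4.
Proof. by move=> /card_uniqP /= <-; apply: eq_card => x; rewrite !inE -!orbA. Qed.

Definition good_vertex c e (v : V) : Prop :=
  (forall T, T \subset e -> #|T| = 3 -> v \in T -> c T = Some v) /\
  c (e :\ v) = None.

Lemma good_vertex_shared c e e' T (v v' : V) :
  #|e'| = 4 -> good_vertex c e v -> good_vertex c e' v' -> v' \in e' ->
  T \subset e -> T \subset e' -> #|T| = 3 -> v \in T -> v' = v.
Proof.
move=> card_e' [good_v _] [good_v' none_v'] v'_e' Te Te' card_T vT.
have cT : c T = Some v by apply: good_v.
have [v'T | v'_notin_T] := boolP (v' \in T); first by move: cT; rewrite good_v' // => -[].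
suff T_eq : T = e' :\ v' by rewrite -T_eq cT in none_v'.
have card_D : #|e' :\ v'| = 3 by move: (cardsD1 v' e'); rewrite v'_e' card_e' => -[].
apply/eqP; rewrite eqEcard card_T card_D leqnn andbT.
by apply/subsetP => x xT; rewrite !inE (subsetP Te') // andbT; apply: contraNneq v'_notin_T => <-.
Qed.

Lemma good_vertex_slide c (a0 a1 a2 a3 a4 : V) p q :
  uniq [:: a0; a1; a2; a3] -> uniq [:: a1; a2; a3; a4] -> p < 4 -> q < 4 ->
  good_vertex c [set a0; a1; a2; a3] (nth a0 [:: a0; a1; a2; a3] p) ->
  good_vertex c [set a1; a2; a3; a4] (nth a1 [:: a1; a2; a3; a4] q) ->
  q = (p + 3) %% 4.
Proof.
move=> uniq0 uniq1 lt_p4 lt_q4 good_p good_q.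
pose S := [set a1; a2; a3].
have S_sub0 : S \subset [set a0; a1; a2; a3].
  by apply/subsetP => x; rewrite !inE -!orbA => /or3P [] ->; rewrite ?orbT.
have S_sub1 : S \subset [set a1; a2; a3; a4].
  by apply/subsetP => x; rewrite !inE -!orbA => /or3P [] ->; rewrite ?orbT.
have card_S : #|S| = 3 by apply/card_set3/(subseq_uniq _ uniq1); rewrite /= !eqxx.
(* The two marks coincide if either lies in the shared triple [S]; every other
   case contradicts the distinctness of the window. *)
have same_pq := good_vertex_shared _ good_p good_q _ S_sub0 S_sub1 card_S.
have same_qp := good_vertex_shared _ good_q good_p _ S_sub1 S_sub0 card_S.
rewrite !card_set4 // in same_pq same_qp.
move: uniq0 uniq1 same_pq same_qp; rewrite !inE.
clear good_p good_q S_sub0 S_sub1 card_S.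
case: p q lt_p4 lt_q4 => [|[|[|[|p]]]] [|[|[|[|q]]]] //= _ _.
all: rewrite ?eqxx ?orbT => u0 u1 /(_ erefl isT) pq /(_ erefl isT) qp; try by [].
all: first [move/(_ isT): pq | move/(_ isT): qp] => eq_a.
all: by move: u0 u1; rewrite eq_a /= !inE ?eqxx ?orTb ?orbT ?andbF.
Qed.

Lemma good_labelling_hom_free c : good_labelling E c -> tc_family_hom_free E 2.
Proof.
move=> [_ good_c] l gt_l4 l_mod [phi phi_hom].
have l_gt0 : 0 < l by apply: leq_trans gt_l4.
pose w i k := phi ((i + k) %% l).
have w_succ i k : w i.+1 k = w i k.+1 by rewrite /w addSnnS.
have w_l k : w l k = w 0 k by rewrite /w add0n -modnDml modnn.
have w_edge i : ordered_edge (w i 0) (w i 1) (w i 2) (w i 3).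
  by have := phi_hom _ (ltn_pmod i l_gt0); rewrite /tc_vtx !modnDml.
pose pos i p := p < 4 /\
  good_vertex c [set w i 0; w i 1; w i 2; w i 3] (nth (w i 0) [:: w i 0; w i 1; w i 2; w i 3] p).
have pos_ex i : exists p, pos i p.
  have [v] := good_c _ (proj2 (w_edge i)).
  by rewrite !inE -!orbA => /or4P [] /eqP ->; [exists 0 | exists 1 | exists 2 | exists 3].
have pos_succ i p q : pos i p -> pos i.+1 q -> q = (p + 3) %% 4.
  move=> [lt_p4 good_p] [lt_q4]; rewrite !w_succ => good_q.
  apply: good_vertex_slide lt_p4 lt_q4 good_p good_q; first exact: (proj1 (w_edge i)).
  by have := proj1 (w_edge i.+1); rewrite !w_succ.
have pos_uniq i p q : pos i p -> pos i q -> p = q.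
  move=> pos_p pos_q; have [r pos_r] := pos_ex i.+1.
  have := pos_succ _ _ _ pos_p pos_r; have := pos_succ _ _ _ pos_q pos_r.
  by case: pos_p pos_q => lt_p4 _ [lt_q4 _]; lia.
have [p0 pos_0] := pos_ex 0.
have pos_i i p : pos i p -> p = (p0 + 3 * i) %% 4.
  elim: i p => [|i IH] p pos_p.
    by rewrite muln0 addn0 (pos_uniq 0 p p0) // modn_small //; case: pos_0.
  have [r pos_r] := pos_ex i; move: (IH _ pos_r) (pos_succ _ _ _ pos_r pos_p) (proj1 pos_r); lia.
have pos_l : pos l p0 by rewrite /pos !w_l.
by move: (pos_i _ _ pos_l) l_mod (proj1 pos_0); lia.
Qed.

Lemma marking_good_labelling (mark : {set V} -> option V) :
  (forall e, e \in E -> exists2 x, mark e = Some x & x \in e) ->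
  (forall e e' T x, e \in E -> e' \in E -> T \subset e -> T \subset e' -> #|T| = 3 ->
     mark e = Some x -> x \in T -> mark e' = Some x) ->
  exists c, good_labelling E c.
Proof.
move=> mark_in mark_shared.
pose c T := [pick x in T | [exists e in E, (T \subset e) && (mark e == Some x)]].
have c_marked e T y : e \in E -> T \subset e -> #|T| = 3 -> c T = Some y ->
    y \in T /\ mark e = Some y.
  move=> eE Te card_T; rewrite /c; case: pickP => // x /andP [xT].
  case/existsP=> e' /and3P [e'E Te' /eqP mark_e'] [<-].
  by split; last exact: mark_shared mark_e' xT.
exists c; split=> [T _ x | e eE].
  by rewrite /c; case: pickP => // y /andP [yT _] [<-].
have [x mark_e xe] := mark_in e eE; exists x => //; split=> [T Te card_T xT | ].
  case c_T: (c T) => [y |]; first by have [_ <-] := c_marked _ _ _ eE Te card_T c_T.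
  move: c_T; rewrite /c; case: pickP => // /(_ x) /negbT /negP []; rewrite xT.
  by apply/existsP; exists e; rewrite eE Te mark_e /=.
case c_e: (c (e :\ x)) => [y |] //.
have card_D : #|e :\ x| = 3 by move: (cardsD1 x e); rewrite xe (E_uniform eE) => -[].
have [] := c_marked _ _ _ eE (subsetDl _ _) card_D c_e.
by rewrite mark_e => /[swap] -[->]; rewrite !inE eqxx.
Qed.

(** * Frames and their monodromy *)

Local Notation frame := {ffun 'I_4 -> V}.
Implicit Types (t u w : frame) (p : {perm 'I_4}).

Definition frame_set t : {set V} := [set t k | k : 'I_4].
Definition edge_frame t : bool := injectiveb t && (frame_set t \in E).
Definition frame_at t (n : nat) : V := t (ord4 n).
Definition relabel t (g : 'I_4 -> 'I_4) : frame := [ffun k => t (g k)].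

Definition frame_adj : rel frame := fun t u =>
  [&& edge_frame t, edge_frame u & [exists k0, [forall k, (k != k0) ==> (t k == u k)]]].

Definition tight_walk (f : nat -> V) (m : nat) : Prop :=
  forall i, i <= m -> ordered_edge (f i) (f (i + 1)) (f (i + 2)) (f (i + 3)).

Definition frame_walk t u (j m : nat) (f : nat -> V) : Prop :=
  tight_walk f m /\
  forall k, k < 4 -> f k = frame_at t (j + k) /\ f (m + k) = frame_at u (j + m + k).

Lemma ord4P (k : 'I_4) : [\/ k = ord4 0, k = ord4 1, k = ord4 2 | k = ord4 3].
Proof.
case: k => [[|[|[|[|k]]]] lt_k4] //.
- by apply: Or41; apply: val_inj.
- by apply: Or42; apply: val_inj.
- by apply: Or43; apply: val_inj.
- by apply: Or44; apply: val_inj.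
Qed.

Lemma frame_setE t :
  frame_set t = [set frame_at t 0; frame_at t 1; frame_at t 2; frame_at t 3].
Proof.
apply/setP => x; rewrite !inE -!orbA; apply/imsetP/or4P => [[k _ ->] | ].
  by case: (ord4P k) => ->; [apply: Or41 | apply: Or42 | apply: Or43 | apply: Or44].
by case=> /eqP ->; eexists.
Qed.

Lemma card_frame_set t : injective t -> #|frame_set t| = 4.
Proof. by move=> t_inj; rewrite card_imset // card_ord. Qed.

Lemma frame_set_relabel t p : frame_set (relabel t p) = frame_set t.
Proof.
apply/setP => x; apply/imsetP/imsetP => [[k _ ->] | [k _ ->]].
  by exists (p k); rewrite ?ffunE.
by exists (p^-1 k)%g; rewrite ?ffunE ?permKV.
Qed.

Lemma edge_frame_relabel t p : edge_frame t -> edge_frame (relabel t p).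
Proof.
case/andP=> /injectiveP t_inj tE; rewrite /edge_frame frame_set_relabel tE andbT.
by apply/injectiveP => a b; rewrite !ffunE => /t_inj /perm_inj.
Qed.

Lemma frame_at_rot4 t r n : frame_at (relabel t (rot4 r)) n = frame_at t (n + r).
Proof. by rewrite /frame_at ffunE permE; congr (t _); apply: ord4_mod; rewrite /= modnDml. Qed.

Lemma frame_window t i : edge_frame t ->
  ordered_edge (frame_at t i) (frame_at t (i + 1)) (frame_at t (i + 2)) (frame_at t (i + 3)).
Proof.
move=> edge_t; have /andP [/injectiveP u_inj uE] := edge_frame_relabel (rot4 i) edge_t.
have shift q : frame_at t (i + q) = frame_at (relabel t (rot4 i)) q by rewrite frame_at_rot4 addnC.
rewrite -{1}[i]addn0 !shift; split; last by rewrite -frame_setE.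
by rewrite (map_inj_uniq u_inj [:: ord4 0; ord4 1; ord4 2; ord4 3]).
Qed.

Lemma frame_walk_refl t j n : edge_frame t -> frame_walk t t j n (fun i => frame_at t (j + i)).
Proof.
move=> edge_t; split=> [i _ | k _]; last by rewrite addnA.
by rewrite !addnA; apply: frame_window.
Qed.

Definition walk_cat (f g : nat -> V) (m : nat) : nat -> V :=
  fun x => if x < m then f x else g (x - m).

Section WalkCat.
Variables (f g : nat -> V) (m : nat).
Hypothesis junction : forall k, k < 4 -> f (m + k) = g k.

Lemma walk_cat_l x : x <= m + 3 -> walk_cat f g m x = f x.
Proof.
rewrite /walk_cat; case: ltnP => // le_mx le_x.
by rewrite -junction ?subnKC //; lia.
Qed.

Lemma walk_cat_r x : m <= x -> walk_cat f g m x = g (x - m).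
Proof. by rewrite /walk_cat; case: ltnP. Qed.

Lemma tight_walk_cat n : tight_walk f m -> tight_walk g n -> tight_walk (walk_cat f g m) (m + n).
Proof.
move=> walk_f walk_g i le_i; have [le_im | lt_mi] := leqP i m.
  by rewrite !walk_cat_l; [apply: walk_f | lia ..].
rewrite !walk_cat_r; try lia.
have shift q : i + q - m = i - m + q by lia.
by rewrite !shift; apply: walk_g; lia.
Qed.

End WalkCat.

Lemma frame_walk_cat t u w j m n f g :
  frame_walk t u j m f -> frame_walk u w (j + m) n g -> frame_walk t w j (m + n) (walk_cat f g m).
Proof.
move=> [walk_f ends_f] [walk_g ends_g].
have junction k : k < 4 -> f (m + k) = g k.
  by move=> lt_k4; case: (ends_f k lt_k4) (ends_g k lt_k4) => _ -> [-> _].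
split=> [| k lt_k4]; first exact: tight_walk_cat.
rewrite (walk_cat_l junction) ?walk_cat_r; try lia.
by rewrite -!addnA addKn !addnA; case: (ends_f k lt_k4) (ends_g k lt_k4) => -> _ [_ ->].
Qed.

(* Reading [t] cyclically from phase [j] until the coordinate [k0] where [u]
   differs comes next, and then continuing with [u], is a tight walk. *)
Lemma frame_adj_walk t u j : frame_adj t u -> exists m f, frame_walk t u j m f.
Proof.
case/and3P=> edge_t edge_u /existsP [k0 /forallP agree].
have t_u n : n %% 4 != k0 -> frame_at t n = frame_at u n.
  by move=> n_k0; apply/eqP/(implyP (agree _)); apply: contra n_k0 => /eqP <-.
have lt_k04 := ltn_ord k0.
pose d := (k0 + 4 - j %% 4) %% 4.
pose f n := frame_at (if n < d + 4 then t else u) (j + n).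
have f_t n : n < d + 4 -> f n = frame_at t (j + n) by rewrite /f => ->.
have f_u n : d < n -> f n = frame_at u (j + n).
  rewrite /f; case: (ltnP n (d + 4)) => // lt_n lt_dn; apply: t_u; rewrite /d in lt_n lt_dn; lia.
exists d.+1, f; split=> [i le_i | k lt_k4].
  have [le_id | lt_di] := leqP i d.
    by rewrite !f_t ?addnA; [apply: frame_window | lia ..].
  by rewrite !f_u ?addnA; [apply: frame_window | lia ..].
by rewrite f_t ?f_u ?addnA //; lia.
Qed.

Lemma edge_frame_adj_r t u : frame_adj t u -> edge_frame u.
Proof. by case/and3P. Qed.

Lemma connect_frame_walk t u j : edge_frame t -> connect frame_adj t u ->
  exists m f, frame_walk t u j m f.
Proof.
move=> edge_t /connectP [s path_s ->] {u}.
elim: s t j edge_t path_s => [|v s IH] t j edge_t /=.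
  by exists 0, (fun i => frame_at t (j + i)); apply: frame_walk_refl.
case/andP=> adj_tv path_s; have [m [f walk_f]] := frame_adj_walk j adj_tv.
have [n [g walk_g]] := IH v (j + m) (edge_frame_adj_r adj_tv) path_s.
by exists (m + n), (walk_cat f g m); apply: frame_walk_cat walk_f walk_g.
Qed.

Lemma closed_walk_hom f M q : tight_walk f M -> 0 < M ->
  (forall k, k < 4 -> f (M + k) = f k) -> 0 < q ->
  tight_cycle_hom E (M * q) (fun n => f (n %% M)).
Proof.
move=> walk_f M_gt0 closed_f q_gt0.
have periodic n : n <= M + 3 -> f n = f (n %% M).
  elim/ltn_ind: n => n IH le_n; have [lt_nM | le_Mn] := ltnP n M; first by rewrite modn_small.
  by rewrite -(subnKC le_Mn) closed_f ?modnDl; [apply: IH | ..]; lia.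
have window i k : k <= 3 -> f (tc_vtx (M * q) i k %% M) = f (i %% M + k).
  move=> le_k3; rewrite /tc_vtx modn_dvdm ?dvdn_mulr // -modnDml -periodic //.
  by have := ltn_pmod i M_gt0; lia.
by move=> i _; rewrite !window // addn0; apply: walk_f; have := ltn_pmod i M_gt0; lia.
Qed.

Lemma cycle_length_2_mod_4 M : M %% 4 != 0 ->
  exists2 q, 0 < q & 4 < M * q /\ M * q = 2 %[mod 4].
Proof.
move=> M_mod; have [M_2 | M_odd] := eqVneq (M %% 4) 2; first by exists 3; lia.
by exists 6; lia.
Qed.

Lemma frame_adj_sym : symmetric frame_adj.
Proof.
suff adj_sym t u : frame_adj t u -> frame_adj u t by move=> t u; apply/idP/idP; apply: adj_sym.
case/and3P=> edge_t edge_u /existsP [k0 /forallP agree]; rewrite /frame_adj edge_t edge_u /=.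
by apply/existsP; exists k0; apply/forallP => k; rewrite (eq_sym (u k)); apply: agree.
Qed.

Lemma frame_adj_relabel t u p : frame_adj t u -> frame_adj (relabel t p) (relabel u p).
Proof.
case/and3P=> edge_t edge_u /existsP [k0 /forallP agree].
rewrite /frame_adj !edge_frame_relabel //=; apply/existsP; exists (p^-1 k0)%g.
apply/forallP => k; rewrite !ffunE; apply/implyP => k_ne; apply: (implyP (agree (p k))).
by apply: contra k_ne => /eqP <-; rewrite permK.
Qed.

Lemma connect_adj_sym : connect_sym frame_adj.
Proof. exact: sym_connect_sym frame_adj_sym. Qed.

Lemma root_frame_adj t u : frame_adj t u -> root frame_adj u = root frame_adj t.
Proof. by move=> adj_tu; apply/esym/(rootP connect_adj_sym)/connect1. Qed.

Lemma connect_relabel t u p :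
  connect frame_adj t u -> connect frame_adj (relabel t p) (relabel u p).
Proof.
move=> /connectP [s path_s ->] {u}; elim: s t path_s => [|v s IH] t //= /andP [adj_tv path_s].
exact: connect_trans (connect1 (frame_adj_relabel p adj_tv)) (IH v path_s).
Qed.

Definition monodromy t p : bool := connect frame_adj t (relabel t p).

Lemma monodromy_mul t g h : monodromy t g -> monodromy t h -> monodromy t (g * h)%g.
Proof.
move=> loop_g loop_h; apply: connect_trans loop_g _.
have -> : relabel t (g * h)%g = relabel (relabel t h) g by apply/ffunP => k; rewrite !ffunE permM.
exact: connect_relabel.
Qed.

Lemma monodromy_connect t w p : connect frame_adj t w -> monodromy w p = monodromy t p.
Proof.
suff loop_tw t' w' : connect frame_adj t' w' -> monodromy t' p -> monodromy w' p.
  by move=> tw; apply/idP/idP; apply: loop_tw; rewrite // connect_adj_sym.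
move=> tw loop_t; apply: connect_trans (connect_trans _ loop_t) (connect_relabel p tw).
by rewrite connect_adj_sym.
Qed.

(* Closing the lifted walk by a partial turn of [t] gives a closed tight walk
   whose length is congruent to [- r] modulo 4. *)
Lemma rot4_monodromy_not_hom_free t r :
  edge_frame t -> monodromy t (rot4 r) -> r %% 4 != 0 -> ~ tc_family_hom_free E 2.
Proof.
move=> edge_t loop_t r_ne0 hom_free.
have [m [f walk_f]] := connect_frame_walk 0 edge_t loop_t.
pose d := 4 - (m + r) %% 4.
have edge_rot := edge_frame_relabel (rot4 r) edge_t.
have [walk_F ends_F] := frame_walk_cat walk_f (frame_walk_refl (0 + m) d edge_rot).
set F := walk_cat _ _ _ in walk_F ends_F.
have closed_F k : k < 4 -> F (m + d + k) = F k.
  move=> lt_k4; have [-> ->] := ends_F k lt_k4.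
  by rewrite frame_at_rot4 /frame_at; congr (t _); apply: ord4_mod; rewrite /d; lia.
have M_mod : (m + d) %% 4 != 0 by rewrite /d; lia.
have [q q_gt0 [l_gt4 l_mod]] := cycle_length_2_mod_4 M_mod.
apply: (hom_free _ l_gt4 l_mod); exists (fun n => F (n %% (m + d))).
by apply: closed_walk_hom => //; lia.
Qed.

Lemma monodromy_common_fixpoint t : tc_family_hom_free E 2 -> edge_frame t ->
  exists k, forall p, monodromy t p -> p k = k.
Proof.
move=> hom_free edge_t; apply: perm4_common_fixpoint => [g h | p loop_p].
  exact: monodromy_mul.
have [// | /existsPn /forallP /derangement_conj_rot4 [s [r r_ne0 conj_s]]] :=
  boolP [exists k, p k == k].
exfalso; apply: (rot4_monodromy_not_hom_free (edge_frame_relabel s edge_t) _ r_ne0 hom_free).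
rewrite /monodromy (_ : relabel _ (rot4 r) = relabel (relabel t p) s); first exact: connect_relabel.
by apply/ffunP => k; rewrite !ffunE conj_s.
Qed.

Lemma connect_edge_frame t u : connect frame_adj t u -> edge_frame t -> edge_frame u.
Proof.
move=> /connectP [s path_s ->] {u}; elim: s t path_s => //= v s IH t /andP [adj_tv path_s] _.
exact: IH path_s (edge_frame_adj_r adj_tv).
Qed.

Definition frames_of e : {set frame} := [set t : frame | injectiveb t & frame_set t == e].

Lemma frames_ofP e t : reflect (injective t /\ frame_set t = e) (t \in frames_of e).
Proof. by rewrite inE; apply: (iffP andP) => -[/injectiveP ? /eqP ?]. Qed.

Lemma frames_of_edge e t : e \in E -> t \in frames_of e -> edge_frame t.
Proof.
by move=> eE /frames_ofP [t_inj t_e]; rewrite /edge_frame t_e eE andbT; apply/injectiveP.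
Qed.

Lemma frames_of_nonempty e : #|e| = 4 -> exists t, t \in frames_of e.
Proof.
move=> card_e; have [x0 _] : {x0 | x0 \in e} by apply/sigW/set0Pn; rewrite -card_gt0 card_e.
have size_e : size (enum e) = 4 by rewrite -cardE.
pose t : frame := [ffun k : 'I_4 => nth x0 (enum e) k].
have t_inj : injective t.
  move=> a b; rewrite !ffunE => /eqP; rewrite nth_uniq ?enum_uniq ?size_e //.
  by move=> /eqP /val_inj.
exists t; apply/frames_ofP; split=> //.
apply/eqP; rewrite eqEcard card_frame_set // card_e leqnn andbT.
by apply/subsetP => _ /imsetP [k _ ->]; rewrite ffunE -mem_enum mem_nth ?size_e.
Qed.

Lemma frame_relabel_eq t w : injective t -> injective w -> frame_set w = frame_set t ->
  exists p, w = relabel t p.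
Proof.
move=> t_inj w_inj w_t.
have preimage k : {j | t j == w k}.
  apply/sigW; have /imsetP [j _ w_j] : w k \in frame_set t by rewrite -w_t imset_f.
  by exists j; rewrite w_j.
pose g k := sval (preimage k).
have t_g k : t (g k) = w k by apply/eqP; rewrite /g; case: (preimage k).
have g_inj : injective g by move=> a b g_ab; apply: w_inj; rewrite -!t_g g_ab.
by exists (perm g_inj); apply/ffunP => k; rewrite !ffunE permE t_g.
Qed.

Lemma frame_adj_coord t u k : frame_adj t u -> t k \in frame_set u -> u k = t k.
Proof.
case/and3P=> /andP [/injectiveP t_inj _] _ /existsP [k0 /forallP agree].
have agree_k j : j != k0 -> u j = t j by move=> j_k0; apply/esym/eqP/(implyP (agree j)).
have [-> {k} | /agree_k -> //] := eqVneq k k0.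
case/imsetP=> j _ t_k0; have [j_k0 | j_k0] := eqVneq j k0; first by rewrite t_k0 j_k0.
by have k0_j := t_inj _ _ (etrans t_k0 (agree_k _ j_k0)); rewrite k0_j eqxx in j_k0.
Qed.

(* Exchanging the vertex of [frame_set t] outside the triple [T] for the vertex
   of [e'] outside [T], in the same coordinate. *)
Lemma frame_adj_exists t e' T : edge_frame t -> e' \in E ->
  T \subset frame_set t -> T \subset e' -> #|T| = 3 ->
  exists2 u, u \in frames_of e' & frame_adj t u.
Proof.
move=> edge_t e'E T_t T_e' card_T; have /andP [/injectiveP t_inj _] := edge_t.
have [k0 t_T] : exists k0, forall k, k != k0 -> t k \in T.
  have /eqP /cards1P [x0 out_T] : #|frame_set t :\: T| = 1.
    by rewrite cardsD (setIidPr T_t) card_frame_set ?card_T.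
  have /imsetP [k0 _ x0_k0] : x0 \in frame_set t.
    by have := set11 x0; rewrite -out_T => /setDP [].
  exists k0 => k k_k0; apply: contraR k_k0 => k_T; apply/eqP/t_inj; rewrite -x0_k0.
  by apply/set1P; rewrite -out_T !inE k_T imset_f.
have [y /setDP [y_e' y_T]] : exists y, y \in e' :\: T.
  by apply/set0Pn; rewrite -card_gt0 cardsD (setIidPr T_e') (E_uniform e'E) card_T.
pose u : frame := [ffun k => if k == k0 then y else t k].
have u_e' k : u k \in e' by rewrite ffunE; case: eqP => // /eqP /t_T /(subsetP T_e').
have u_inj : injective u.
  have t_y k : k != k0 -> t k != y by move=> /t_T; apply: contraTneq => ->.
  move=> a b; rewrite !ffunE.
  have [-> | a_k0] := eqVneq a k0; have [-> | b_k0] := eqVneq b k0 => //.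
  - by move=> /esym /eqP; rewrite (negbTE (t_y b b_k0)).
  - by move=> /eqP; rewrite (negbTE (t_y a a_k0)).
  - exact: t_inj.
have u_set : frame_set u = e'.
  apply/eqP; rewrite eqEcard card_frame_set // (E_uniform e'E) leqnn andbT.
  by apply/subsetP => _ /imsetP [k _ ->].
have u_frame : u \in frames_of e' by apply/frames_ofP.
exists u => //; rewrite /frame_adj edge_t (frames_of_edge e'E u_frame) /=.
apply/existsP; exists k0; apply/forallP => k; rewrite ffunE.
by have [-> | k_k0] := eqVneq k k0; rewrite ?eqxx.
Qed.

Definition fixed_by_monodromy t (k : 'I_4) : bool := [forall p, monodromy t p ==> (p k == k)].

Lemma fixed_by_monodromy_connect t w k :
  connect frame_adj t w -> fixed_by_monodromy w k = fixed_by_monodromy t k.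
Proof. by move=> tw; apply: eq_forallb => p; rewrite (monodromy_connect p tw). Qed.

Lemma fixed_coord_connect t w k : injective t -> injective w -> frame_set w = frame_set t ->
  connect frame_adj t w -> fixed_by_monodromy t k -> w k = t k.
Proof.
move=> t_inj w_inj w_t tw /forallP /(_ _) /implyP fixed_k.
have [p w_def] := frame_relabel_eq t_inj w_inj w_t.
by rewrite w_def ffunE (eqP (fixed_k p _)) // /monodromy -w_def.
Qed.

Definition frame_roots e : {set frame} := [set root frame_adj t | t in frames_of e].

(* The component [r] is picked from [frame_roots e], which is the same set for
   all edges meeting [e] in a triple. *)
Definition marked_vertex e : option V :=
  if [pick r in frame_roots e] is Some r then
    if [pick t in frames_of e | root frame_adj t == r] is Some t then
      omap (fun k => t k) [pick k | fixed_by_monodromy r k]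
    else None
  else None.

Lemma frame_roots_shared e e' T : e \in E -> e' \in E ->
  T \subset e -> T \subset e' -> #|T| = 3 -> frame_roots e \subset frame_roots e'.
Proof.
move=> eE e'E T_e T_e' card_T; apply/subsetP => _ /imsetP [t t_e ->].
have T_t : T \subset frame_set t by case/frames_ofP: t_e => _ ->.
have [u u_e' adj_tu] := frame_adj_exists (frames_of_edge eE t_e) e'E T_t T_e' card_T.
by apply/imsetP; exists u; rewrite ?(root_frame_adj adj_tu).
Qed.

Lemma marked_vertex_shared e e' T x : e \in E -> e' \in E ->
  T \subset e -> T \subset e' -> #|T| = 3 ->
  marked_vertex e = Some x -> x \in T -> marked_vertex e' = Some x.
Proof.
move=> eE e'E T_e T_e' card_T.
have roots_eq : frame_roots e' = frame_roots e.
  by apply/eqP; rewrite eqEsubset !(frame_roots_shared _ _ _ _ card_T).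
rewrite /marked_vertex roots_eq; case: pickP => // r _.
case: pickP => // t /andP [t_e /eqP t_r].
case: pickP => // k fixed_k [<-] xT.
have T_t : T \subset frame_set t by case/frames_ofP: t_e => _ ->.
have [u u_e' adj_tu] := frame_adj_exists (frames_of_edge eE t_e) e'E T_t T_e' card_T.
have u_r : root frame_adj u = r by rewrite (root_frame_adj adj_tu).
case: pickP => [w /andP [w_e' /eqP w_r] | no_frame]; last first.
  by have := no_frame u; rewrite u_e' u_r eqxx.
case/frames_ofP: u_e' => u_inj u_set; case/frames_ofP: w_e' (w_e') => w_inj w_set _.
congr Some.
rewrite (fixed_coord_connect u_inj w_inj) ?(frame_adj_coord adj_tu) ?u_set ?w_set //.
- exact: (subsetP T_e').
- by apply/(rootP connect_adj_sym); rewrite u_r w_r.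
- by rewrite -(fixed_by_monodromy_connect k (connect_root _ u)) u_r.
Qed.

Lemma marked_vertex_in e : tc_family_hom_free E 2 -> e \in E ->
  exists2 x, marked_vertex e = Some x & x \in e.
Proof.
move=> hom_free eE; have [t0 t0_e] := frames_of_nonempty (E_uniform eE).
rewrite /marked_vertex; case: pickP => [_ /imsetP [t1 t1_e ->] | no_root]; last first.
  by have := no_root (root frame_adj t0); rewrite imset_f.
case: pickP => [t /andP [t_e _] | no_frame]; last by have := no_frame t1; rewrite t1_e eqxx.
have edge_r := connect_edge_frame (connect_root _ t1) (frames_of_edge eE t1_e).
have [k fixed_k] := monodromy_common_fixpoint hom_free edge_r.
case: pickP => [k' _ | no_fixed]; last first.
  move: (no_fixed k) => /forallPn [p]; rewrite negb_imply => /andP [/fixed_k ->].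
  by rewrite eqxx.
by exists (t k') => //; case/frames_ofP: t_e => _ <-; apply: imset_f.
Qed.

Lemma hom_free_good_labelling : tc_family_hom_free E 2 -> exists c, good_labelling E c.
Proof.
move=> hom_free; apply: (marking_good_labelling (mark := marked_vertex)).
  by move=> e; apply: marked_vertex_in.
by move=> e e' T x eE e'E; apply: marked_vertex_shared.
Qed.

End TightCycles.

Theorem theorem1p2 (V : finType) (E : {set {set V}}) :
  uniform4 E ->
  (tc_family_hom_free E 2 <-> exists c : {set V} -> option V, good_labelling E c).
Proof.
move=> E_uniform; split; first exact: hom_free_good_labelling.
by case=> c; apply: good_labelling_hom_free.
Qed.
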